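(* Let $B=F(b_1,\ldots,b_n)$ be a Ferrers board with $0\le b_1\le\cdots\le b_n$. Then, as polynomials in $x$, $$x^n=\sum_{k=0}^n\mathbf{rPT}_{n-k}(B,p,q,r)\,(x-P_{b_1}(p,q,r))(x-P_{b_2}(p,q,r))\cdots(x-P_{b_k}(p,q,r)),$$ where the empty product ($k=0$) equals 1.
   Context: For $m\ge1$, a $P$-tiling of height $m$ is a tiling of a column of height $m$ by tiles of heights 1, 2 and 3 whose bottom-most tile has height 1. $P_m(p,q,r)=\sum_T q^{\mathrm{one}(T)}p^{\mathrm{two}(T)}r^{\mathrm{three}(T)}$ over all $P$-tilings $T$ of height $m$, where $\mathrm{one},\mathrm{two},\mathrm{three}$ count tiles of height 1, 2, 3. There are no $P$-tilings of height 0 and $P_0(p,q,r)=0$. A Ferrers board $F(b_1,\ldots,b_n)$ has column heights $b_1,\ldots,b_n$ from left to right. A $P$-rook placement of $k$ tilings in $B=F(b_1,\ldots,b_n)$ is a choice of columns $1\le i_1<\cdots<i_k\le n$ with, for each $s=1,\ldots,k$, a $P$-tiling of height $b_{i_s-(s-1)}$ in column $i_s$ (the number of cells of column $i_s$ left uncanceled by earlier tilings, each tiling canceling top cells of columns to its right so that after $s$ tilings the untiled columns have $b_1,\ldots,b_{n-s}$ uncanceled cells). Its weight is $q^ap^br^c$ with $a,b,c$ the total numbers of tiles of height 1, 2, 3 used. $\mathbf{rPT}_k(B,p,q,r)$ is the sum of the weights of all $P$-rook placements of $k$ tilings in $B$ (the empty placement has weight 1). *)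

From mathcomp Require Import all_boot all_order all_algebra.
Set Implicit Arguments. Unset Strict Implicit. Unset Printing Implicit Defensive.
Import GRing.Theory.
Local Open Scope ring_scope.

(* A tile is encoded by i : 'I_3, of height (val i).+1 (1, 2 or 3).
   A tiling of a column is the sequence of its tiles listed from bottom to top. *)
Definition tile_height (i : 'I_3) : nat := (val i).+1.

Definition tile_weight (R : comNzRingType) (p q r : R) (i : 'I_3) : R :=
  match val i with 0 => q | 1 => p | _ => r end.

Definition is_Ptiling (m : nat) (t : seq 'I_3) : bool :=
  (sumn [seq tile_height i | i <- t] == m) &&
  (if t is i :: _ then tile_height i == 1%N else false).

(* P_m(p,q,r) = sum over all P-tilings of height m (which have at most m tiles)
   of q^one p^two r^three *)
Definition Ptil (R : comNzRingType) (p q r : R) (m : nat) : R :=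
  \sum_(k < m.+1) \sum_(t : k.-tuple 'I_3 | is_Ptiling m t)
     \prod_(i <- t) tile_weight p q r i.

(* A placement chooses columns
   i_1 < .. < i_k (the set S, enumerated increasingly by enum S; 0-based
   column indices), and for the s-th chosen column (0-based j) a P-tiling of
   height b_{i_s-(s-1)} (0-based: nth 0 b (i - j)).  The weight is multiplicative,
   so summing over the independent choices of tilings gives the product of the
   corresponding P's. *)
Definition rPT (R : comNzRingType) (p q r : R) (b : seq nat) (k : nat) : R :=
  \sum_(S : {set 'I_(size b)} | #|S| == k)
     let s := [seq val i | i <- enum S] in
     \prod_(j < size s) Ptil p q r (nth 0%N b (nth 0%N s j - j)).

From mathcomp Require Import all_boot all_order all_algebra ring.
Import GRing.Theory.
Local Open Scope ring_scope.

(* The P-tilings enter rPT only through the heights P_{b_j}, so the theorem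
   is the factorization x^n = sum_k G_{n,n-k} (x - a_0)...(x - a_{k-1}) for an
   arbitrary sequence a, where G_{n,k} sums, over the k-subsets
   i_0 < .. < i_{k-1} of {0,..,n-1}, the products of the a(i_s - s).  Both
   sides obey the same recursion in n: multiplying by x = (x - a_k) + a_k
   shifts the product basis, while G_{n+1,k} = G_{n,k} + a(n-k+1) G_{n,k-1}
   according to whether the last column n is chosen. *)

Set Implicit Arguments. Unset Strict Implicit.

Definition set_nats n (S : {set 'I_n}) : seq nat := [seq val i | i <- enum S].

Lemma sorted_set_nats n (S : {set 'I_n}) : sorted ltn (set_nats S).
Proof.
apply: (@subseq_sorted _ _ ltn_trans _ (iota 0 n)); last exact: iota_ltn_sorted.
rewrite -val_enum_ord /set_nats; apply: map_subseq.
by rewrite enumT /enum_mem; apply: filter_subseq.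
Qed.

Lemma size_set_nats n (S : {set 'I_n}) : size (set_nats S) = #|S|.
Proof. by rewrite /set_nats size_map -cardE. Qed.

Lemma mem_set_natsP n (S : {set 'I_n}) m :
  reflect (exists2 i : 'I_n, i \in S & m = val i) (m \in set_nats S).
Proof.
apply: (iffP mapP) => [[i]|[i]]; rewrite ?mem_enum => Si ->;
  by exists i; rewrite ?mem_enum.
Qed.

Section WidenSet.

Variable n : nat.

Definition widen_set (S : {set 'I_n}) : {set 'I_n.+1} :=
  [set widen_ord (leqnSn n) i | i in S].

Definition narrow_set (S : {set 'I_n.+1}) : {set 'I_n} :=
  [set i : 'I_n | widen_ord (leqnSn n) i \in S].

Lemma widen_ordS_inj : injective (widen_ord (leqnSn n)).
Proof. by move=> i j /(congr1 val) /= /val_inj. Qed.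

Lemma card_widen_set S : #|widen_set S| = #|S|.
Proof. by rewrite /widen_set (card_imset _ widen_ordS_inj). Qed.

Lemma ord_max_notin_widen_set S : ord_max \notin widen_set S.
Proof.
by apply/imsetP => -[i _ /(congr1 val) /= ni]; move: (ltn_ord i); rewrite -ni ltnn.
Qed.

Lemma narrow_widen_set S : narrow_set (widen_set S) = S.
Proof. by apply/setP => i; rewrite inE (mem_imset _ _ widen_ordS_inj). Qed.

Lemma narrow_setU1_max S : narrow_set (ord_max |: S) = narrow_set S.
Proof.
apply/setP => i; rewrite !inE; case: eqP => //= /(congr1 val) /= ni.
by move: (ltn_ord i); rewrite ni ltnn.
Qed.

Lemma widen_narrow_set S : widen_set (narrow_set S) = S :\ ord_max.
Proof.
apply/setP => x; rewrite in_setD1; apply/imsetP/andP => [[i]|[x_max Sx]].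
  rewrite inE => Si ->; split => //; apply/eqP => /(congr1 val) /= ni.
  by move: (ltn_ord i); rewrite ni ltnn.
have x_lt_n : (x < n)%N.
  rewrite ltn_neqAle -ltnS ltn_ord andbT; apply: contra x_max => /eqP xn.
  by apply/eqP/val_inj.
have widen_x : widen_ord (leqnSn n) (Ordinal x_lt_n) = x by apply: val_inj.
by exists (Ordinal x_lt_n); rewrite ?inE widen_x.
Qed.

Lemma set_nats_widen_set S : set_nats (widen_set S) = set_nats S.
Proof.
apply: (irr_sorted_eq ltn_trans ltnn); rewrite ?sorted_set_nats // => m.
apply/mem_set_natsP/mem_set_natsP => [[i /imsetP [j Sj ->] ->]|[i Si ->]].
  by exists j.
by exists (widen_ord (leqnSn n) i); rewrite ?imset_f.
Qed.

Lemma set_nats_widen_setU1_max S :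
  set_nats (ord_max |: widen_set S) = rcons (set_nats S) n.
Proof.
apply: (irr_sorted_eq ltn_trans ltnn); rewrite ?sorted_set_nats //.
  rewrite (sorted_pairwise ltn_trans) -cats1 pairwise_cat.
  rewrite -(sorted_pairwise ltn_trans) sorted_set_nats /= !andbT.
  by apply/allrelP => m k /mem_set_natsP [i _ ->]; rewrite inE => /eqP ->; apply: ltn_ord.
move=> m; rewrite mem_rcons inE.
apply/mem_set_natsP/orP => [[i]|].
  rewrite in_setU1 => /orP [/eqP -> ->|/imsetP [j Sj ->] ->]; first by left.
  by right; apply/mem_set_natsP; exists j.
case=> [/eqP ->|/mem_set_natsP [i Si ->]]; first by exists ord_max; rewrite ?setU11.
by exists (widen_ord (leqnSn n) i); rewrite // in_setU1 imset_f ?orbT.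
Qed.

End WidenSet.

Section RookFactorization.

Variables (R : comNzRingType) (a : nat -> R).

Definition rook_weight (s : seq nat) : R :=
  \prod_(j < size s) a (nth 0%N s j - j).

Definition rook_number (n k : nat) : R :=
  \sum_(S : {set 'I_n} | #|S| == k) rook_weight (set_nats S).

Lemma rook_weight_rcons s m :
  rook_weight (rcons s m) = rook_weight s * a (m - size s).
Proof.
rewrite /rook_weight size_rcons big_ord_recr /= nth_rcons ltnn eqxx.
by congr (_ * _); apply: eq_bigr => j _; rewrite nth_rcons ltn_ord.
Qed.

Lemma rook_number0 n : rook_number n 0 = 1.
Proof.
rewrite /rook_number (eq_bigl (pred1 set0)); last by move=> S; rewrite cards_eq0.
by rewrite big_pred1_eq /set_nats enum_set0 /rook_weight big_ord0.
Qed.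

Lemma rook_number_gt n k : (n < k)%N -> rook_number n k = 0.
Proof.
move=> n_lt_k; apply: big1 => S /eqP cardS.
by move: (max_card S); rewrite card_ord cardS leqNgt n_lt_k.
Qed.

Lemma rook_number_without_max n k :
  \sum_(S : {set 'I_n.+1} | (#|S| == k) && (ord_max \notin S))
     rook_weight (set_nats S) = rook_number n k.
Proof.
rewrite (reindex_onto (@widen_set n) (@narrow_set n)); last first.
  move=> S /andP [_ S_max]; rewrite widen_narrow_set; apply/setP => x.
  by rewrite in_setD1; case: eqP => // ->; rewrite (negbTE S_max).
apply: eq_big => [S|S _]; last by rewrite set_nats_widen_set.
by rewrite narrow_widen_set eqxx ord_max_notin_widen_set card_widen_set !andbT.
Qed.

Lemma rook_number_with_max n k :
  \sum_(S : {set 'I_n.+1} | (#|S| == k.+1) && (ord_max \in S))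
     rook_weight (set_nats S) = a (n - k) * rook_number n k.
Proof.
rewrite mulr_sumr (reindex_onto (fun S => ord_max |: @widen_set n S) (@narrow_set n)).
  apply: eq_big => [S|S /andP [/andP [cardS _] _]].
    by rewrite narrow_setU1_max narrow_widen_set eqxx setU11 cardsU1
               ord_max_notin_widen_set card_widen_set !andbT.
  move: cardS; rewrite cardsU1 ord_max_notin_widen_set card_widen_set eqSS => /eqP k_eq.
  by rewrite set_nats_widen_setU1_max rook_weight_rcons size_set_nats k_eq mulrC.
by move=> S /andP [_ S_max]; rewrite widen_narrow_set setD1K.
Qed.

Lemma rook_numberS n k :
  rook_number n.+1 k =
  rook_number n k + if k is k'.+1 then a (n - k') * rook_number n k' else 0.
Proof.
case: k => [|k]; first by rewrite !rook_number0 addr0.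
rewrite /rook_number (bigID (fun S : {set 'I_n.+1} => ord_max \in S)) /= addrC.
by rewrite rook_number_without_max rook_number_with_max.
Qed.

Lemma rook_factorization n :
  'X^n = \sum_(k < n.+1) (rook_number n (n - k))%:P * \prod_(i < k) ('X - (a i)%:P).
Proof.
elim: n => [|n IHn]; first by rewrite big_ord1 rook_number0 big_ord0 mulr1 expr0.
set P := fun k => \prod_(i < k) ('X - (a i)%:P).
have XP k : 'X * P k = P k.+1 + (a k)%:P * P k.
  by rewrite /P big_ord_recr /=; set u := \prod_(i < k) _; ring.
rewrite exprS IHn mulr_sumr.
under eq_bigr => k _ do rewrite mulrCA XP mulrDr.
under [in RHS]eq_bigr => k _ do rewrite rook_numberS rmorphD mulrDl.
rewrite !big_split /=; congr (_ + _).
  rewrite [in RHS]big_ord_recl /= rook_number_gt // polyC0 mul0r add0r.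
  by apply: eq_bigr => k _; rewrite /bump /= subSS.
rewrite [in RHS]big_ord_recr /= subnn polyC0 mul0r addr0.
apply: eq_bigr => k _ /=; have k_le_n : (k <= n)%N by rewrite -ltnS.
by rewrite subSn //= subKn // rmorphM mulrCA mulrA.
Qed.

End RookFactorization.

Theorem theorem8 (R : comNzRingType) (p q r : R) (b : seq nat) :
  sorted leq b ->
  'X^(size b) =
  \sum_(k < (size b).+1)
     (rPT p q r b (size b - k))%:P *
     \prod_(i < k) ('X - (Ptil p q r (nth 0%N b i))%:P).
Proof. by move=> _; apply: (rook_factorization (fun i => Ptil p q r (nth 0%N b i))). Qed.
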